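(* Let $\varepsilon>0$ be a constant, let $C=12/\varepsilon$, and let $G=(V,E)$ be a graph on $n$ vertices with $\delta(G)\geq\left(\frac12+\varepsilon\right)n$. Then, for all sufficiently large $n$, there exists a set $L\subseteq V$ with $|L|\leq C\log n$ such that every pair of distinct vertices $u,v\in V\setminus L$ has at least $12\log n$ common $G$-neighbors in $L$.
   Context: $\log$ denotes the natural logarithm. *)

From mathcomp Require Export all_boot.
From Stdlib Require Export Reals.
Set Implicit Arguments.
Unset Strict Implicit.
Unset Printing Implicit Defensive.

Definition simple_graph (T : finType) (e : rel T) : Prop :=
  symmetric e /\ irreflexive e.

Definition nbhd (T : finType) (e : rel T) (v : T) : {set T} := [set w | e v w].

Definition common_nbrs_in (T : finType) (e : rel T) (L : {set T}) (u v : T)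
  : {set T} := [set w in L | e u w && e v w].
Arguments simple_graph {T} e.
Arguments nbhd {T} e v.
Arguments common_nbrs_in {T} e L u v.

(* Derandomised greedy choice.  For a set L let c_L(u, v) be the number of
   common neighbours of u and v in L, and take the potential
   Phi(L) = sum_{u <> v} 2^(K - c_L(u, v)).  Outside L every pair still has
   about 2 eps n common neighbours, so averaging over the candidates w shows
   that some w multiplies Phi by at most 1 - 0.99 eps.  After
   K ~ 12 ln n / eps greedy steps, Phi(L) <= n^2 2^K (1 - 0.99 eps)^K, hence
   2^(-c_L(u, v)) <= n^2 (1 - 0.99 eps)^K for every pair, i.e.
   c_L(u, v) ln 2 >= 9.88 ln n - eps; as ln 2 < 0.78 this gives
   c_L(u, v) >= 12 ln n. *)

From Stdlib Require Import Lia Psatz ZArith.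
From mathcomp Require Import all_boot zify.

Set Implicit Arguments.
Unset Strict Implicit.
Unset Printing Implicit Defensive.

Section Potential.
Variables (T : finType) (e : rel T).
Local Open Scope nat_scope.

Lemma card_common_nbrs_le (L : {set T}) u v : #|common_nbrs_in e L u v| <= #|L|.
Proof. by apply: subset_leq_card; apply/subsetP => x; rewrite inE => /andP[]. Qed.

Lemma card_common_nbrs_sum (A : {set T}) u v :
  #|common_nbrs_in e A u v| = \sum_(w in A) (e u w && e v w).
Proof.
rewrite -sum1_card [RHS]big_mkcond [LHS]big_mkcond /=; apply: eq_bigr => w _.
by rewrite !inE; case: (w \in A) => //; case: (_ && _).
Qed.

Lemma card_common_nbrs_setU1 (L : {set T}) w u v : w \notin L ->
  #|common_nbrs_in e (w |: L) u v| = #|common_nbrs_in e L u v| + (e u w && e v w).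
Proof. by move=> wL; rewrite !card_common_nbrs_sum big_setU1 //= addnC. Qed.

Lemma card_common_nbrs_compl_ge (L : {set T}) u v d :
  (forall x, d <= #|nbhd e x|) ->
  2 * d - #|T| - #|L| <= #|common_nbrs_in e (~: L) u v|.
Proof.
move=> mindeg.
have cap_le : #|nbhd e u :&: nbhd e v| <= #|common_nbrs_in e (~: L) u v| + #|L|.
  apply: leq_trans (leq_card_setU _ _); apply: subset_leq_card.
  by apply/subsetP => x; rewrite !inE; case: (x \in L); rewrite ?orbT ?orbF.
have := cardsUI (nbhd e u) (nbhd e v); have := max_card (nbhd e u :|: nbhd e v).
have := mindeg u; have := mindeg v; lia.
Qed.

Definition potential K (L : {set T}) :=
  \sum_(p : T * T | p.1 != p.2) 2 ^ (K - #|common_nbrs_in e L p.1 p.2|).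

Lemma potential_le K (L : {set T}) : potential K L <= #|T| ^ 2 * 2 ^ K.
Proof.
rewrite /potential big_mkcond /= -mulnn -card_prod -sum_nat_const.
apply: leq_sum => p _; case: (_ != _) => //.
by rewrite leq_pexp2l ?leq_subr.
Qed.

Lemma potential_ge K (L : {set T}) u v : u != v ->
  2 ^ (K - #|common_nbrs_in e L u v|) <= potential K L.
Proof. by move=> uv; rewrite /potential (bigD1 (u, v)) //= leq_addr. Qed.

Lemma expn2_sub_addb K c (b : bool) : c < K ->
  2 * 2 ^ (K - (c + b)) = 2 ^ (K - c) * (2 - b).
Proof.
move=> cK; case: b; last by rewrite addn0 mulnC.
by rewrite addn1 subnS -expnS prednK ?subn_gt0 // muln1.
Qed.

Lemma sum_potential_term_setU1 K (L : {set T}) u v : #|L| < K ->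
  \sum_(w in ~: L) 2 * 2 ^ (K - #|common_nbrs_in e (w |: L) u v|) =
  2 ^ (K - #|common_nbrs_in e L u v|) * (2 * #|~: L| - #|common_nbrs_in e (~: L) u v|).
Proof.
move=> LK; have cK := leq_ltn_trans (card_common_nbrs_le L u v) LK.
rewrite (eq_bigr (fun w => 2 ^ (K - #|common_nbrs_in e L u v|) * (2 - (e u w && e v w)))); last first.
  by move=> w; rewrite inE => wL; rewrite card_common_nbrs_setU1 // expn2_sub_addb.
rewrite -big_distrr /=; congr (_ * _).
rewrite card_common_nbrs_sum -sum1_card big_distrr /=.
rewrite -(addnK (\sum_(w in ~: L) (e u w && e v w)) (\sum_(w in ~: L) _)) -big_split /=.
by congr (_ - _); apply: eq_bigr => w _; rewrite muln1 subnK //; case: (_ && _).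
Qed.

Lemma exists_potential_drop K (L : {set T}) D : #|L| < K -> 0 < #|~: L| ->
  (forall u v, u != v -> D <= #|common_nbrs_in e (~: L) u v|) ->
  exists2 w, w \notin L &
    2 * #|~: L| * potential K (w |: L) <= potential K L * (2 * #|~: L| - D).
Proof.
move=> LK /card_gt0P [w0 w0L] Dle.
have [w wL wmin] :=
  @arg_minnP _ w0 (fun x => x \in ~: L) (fun x => potential K (x |: L)) w0L.
exists w; first by move: wL; rewrite inE.
apply: (@leq_trans (2 * \sum_(x in ~: L) potential K (x |: L))).
  by rewrite -mulnA leq_mul2l -sum_nat_const leq_sum.
rewrite big_distrr /= /potential; under eq_bigr do rewrite big_distrr /=.
rewrite exchange_big /= big_distrl /=; apply: leq_sum => p pne.
by rewrite sum_potential_term_setU1 // leq_mul2l leq_sub2l ?Dle ?orbT.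
Qed.

End Potential.

Local Open Scope R_scope.

Lemma INR_subn_ge (a b : nat) : INR a - INR b <= INR (a - b).
Proof.
case: (leqP b a) => [ba|ab]; first by rewrite minus_INR; [lra | apply/leP].
have := le_INR _ _ (leP (ltnW ab)); have := pos_INR (a - b); lra.
Qed.

Lemma INR_subn_le (a b : nat) : 0 <= INR a - INR b -> INR (a - b) <= INR a - INR b.
Proof.
case: (leqP b a) => [ba|ab] h; first by rewrite minus_INR; [lra | apply/leP].
by move: (ltnW ab); rewrite -subn_eq0 => /eqP ->.
Qed.

Lemma exists_set_geometric_decay (T : finType) (K : nat) (P : {set T} -> nat) (q : R) :
  0 <= q ->
  (forall L : {set T}, (#|L| < K)%N ->
     exists2 w, w \notin L & INR (P (w |: L)) <= INR (P L) * q) ->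
  exists L : {set T}, #|L| = K /\ INR (P L) <= INR (P set0) * q ^ K.
Proof.
move=> q_ge0 step.
suff decay_upto : forall t, (t <= K)%N ->
    exists L : {set T}, #|L| = t /\ INR (P L) <= INR (P set0) * q ^ t.
  exact: decay_upto.
elim=> [|t IH] tK; first by exists set0; rewrite cards0 /=; split => //; lra.
have [L [cardL decay]] := IH (ltnW tK).
have [w wL drop] := step L ltac:(by rewrite cardL).
exists (w |: L); split; first by rewrite cardsU1 wL cardL.
have := pow_le _ t q_ge0; have := pos_INR (P L); simpl; nra.
Qed.

Lemma INR_expn (a b : nat) : INR (a ^ b) = INR a ^ b.
Proof. by elim: b => [|b IH] /=; rewrite ?expnS ?mult_INR ?IH. Qed.

Section GreedyChoice.
Variables (T : finType) (e : rel T) (K d : nat) (q : R).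
Hypotheses (min_deg : forall x, (d <= #|nbhd e x|)%N) (K_le : (K <= #|T|)%N).
Hypotheses (q_ge0 : 0 <= q) (q_le1 : q <= 1).
Hypothesis drop_rate : 2 * (1 - q) * INR #|T| <= 2 * INR d - INR #|T| - INR K.

Lemma exists_potential_drop_rate (L : {set T}) : (#|L| < K)%N ->
  exists2 w, w \notin L & INR (potential e K (w |: L)) <= INR (potential e K L) * q.
Proof.
move=> LK; set m := #|~: L|; set D := (2 * d - #|T| - #|L|)%N.
have m_gt0 : (0 < m)%N by rewrite /m cardsCs setCK subn_gt0 (leq_trans LK).
have m_le : INR m <= INR #|T| by apply/le_INR/leP/max_card.
have D_ge : 2 * (1 - q) * INR #|T| <= INR D.
  have sub_L := INR_subn_ge (2 * d - #|T|) #|L|.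
  have sub_T := INR_subn_ge (2 * d) #|T|; rewrite mult_INR in sub_T; simpl in sub_T.
  have L_le_K := le_INR _ _ (leP (ltnW LK)); have rate := drop_rate.
  (* [set] merges the differently elaborated copies of [#|T|] into one atom for [lra]. *)
  rewrite /D; set n := #|T| in rate sub_L sub_T *; lra.
have [w wL drop] := exists_potential_drop LK m_gt0
  (fun u v _ => card_common_nbrs_compl_ge L u v min_deg).
exists w => //.
have m_pos : 0 < INR m by apply/lt_0_INR/ltP.
have rate : INR (2 * m - D) <= 2 * INR m * q.
  case: (Rle_lt_dec (INR D) (INR (2 * m))) => [Dm|mD].
    have := @INR_subn_le (2 * m) D ltac:(lra); rewrite mult_INR /=; nra.
  have /eqP -> : (2 * m - D == 0)%N by rewrite subn_eq0; apply/ltnW/ltP/INR_lt.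
  simpl; nra.
move/leP/le_INR: drop; rewrite -/m -/D !mult_INR /=.
have := pos_INR (potential e K L); have := pos_INR (potential e K (w |: L)); nra.
Qed.

Lemma exists_greedy_cover : exists L : {set T}, #|L| = K /\
  forall u v, u != v -> 1 <= INR #|T| ^ 2 * q ^ K * 2 ^ #|common_nbrs_in e L u v|.
Proof.
have [L [cardL decay]] :=
  exists_set_geometric_decay q_ge0 exists_potential_drop_rate.
exists L; split => // u v uv; set c := #|common_nbrs_in e L u v|.
have cK : (c <= K)%N by rewrite -cardL card_common_nbrs_le.
have INR2 : INR 2 = 2 by [].
have lo := le_INR _ _ (leP (potential_ge e K L uv)).
have hi := le_INR _ _ (leP (potential_le e K set0)).
rewrite -/c INR_expn INR2 in lo; rewrite mult_INR !INR_expn INR2 in hi.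
have split2K : 2 ^ K = 2 ^ (K - c) * 2 ^ c by rewrite -pow_add; congr pow; lia.
have pos := pow_lt 2 (K - c) ltac:(lra).
apply: (Rmult_le_reg_r (2 ^ (K - c))) => //; rewrite Rmult_1_l.
apply: (Rle_trans _ _ _ lo); apply: (Rle_trans _ _ _ decay).
apply: (Rle_trans _ _ _ (Rmult_le_compat_r _ _ _ (pow_le q K q_ge0) hi)).
by rewrite split2K; right; ring.
Qed.

End GreedyChoice.

Lemma ln_le_ln (x y : R) : 0 < x -> x <= y -> ln x <= ln y.
Proof.
move=> x_pos /Rle_lt_or_eq_dec [xy|<-]; last by right.
by left; apply: ln_increasing.
Qed.

(* 1.26^3 > 2 *)
Lemma ln2_lt : ln 2 < 78/100.
Proof.
have e26 : 1 + 26/100 <= exp (26/100) by apply: exp_ineq1_le.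
have e78 : exp (78/100) = exp (26/100) * exp (26/100) * exp (26/100).
  by rewrite -!exp_plus; congr exp; lra.
rewrite -(ln_exp (78/100)); apply: ln_increasing; first lra.
by rewrite e78; nra.
Qed.

Lemma ln_le_mul_eventually (c : R) : 0 < c ->
  exists N : nat, forall n : nat, (N <= n)%N -> ln (INR n) <= c * INR n.
Proof.
move=> c_pos; have [N N_big] := INR_unbounded (4 / (c * c)).
exists N => n /leP/le_INR N_le.
have n_big : c * c * INR n > 4.
  have : c * c * (4 / (c * c)) = 4 by field; lra.
  have : 0 < c * c by nra.
  nra.
have n_pos : 0 < INR n by nra.
set s := sqrt (INR n); have ss : s * s = INR n by apply: sqrt_sqrt; lra.
have s_pos : 0 < s by apply: sqrt_lt_R0.
have ln_n : ln (INR n) = 2 * ln s by rewrite -ss ln_mult //; lra.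
have ln_s : ln s <= s - 1 by have := exp_ineq1_le (ln s); rewrite exp_ln //; lra.
have cs : 2 < c * s.
  have cs2 : c * s * (c * s) = c * c * INR n by rewrite -ss; ring.
  have : 0 < c * s by nra.
  nra.
rewrite ln_n -ss; nra.
Qed.

Lemma exists_nat_floor (x : R) : 0 <= x -> exists k : nat, x - 1 < INR k <= x.
Proof.
move=> x_ge0; have [lo hi] := base_Int_part x.
have z_ge0 : (0 <= Int_part x)%Z.
  have : (-1 < Int_part x)%Z by apply: lt_IZR; lra.
  lia.
by exists (Z.to_nat (Int_part x)); rewrite INR_IZR_INZ Z2Nat.id //; lra.
Qed.

Lemma exists_min_above (T : finType) (f : T -> nat) (r : R) : (0 < #|T|)%N ->
  (forall v, r <= INR (f v)) -> exists d : nat, (forall v, (d <= f v)%N) /\ r <= INR d.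
Proof.
move=> /card_gt0P [v0 _] f_ge.
have [vm _ vm_min] := @arg_minnP _ v0 predT f isT.
by exists (f vm); split => // v; apply: vm_min.
Qed.

Lemma min_degree_lt_half (T : finType) (e : rel T) (eps : R) :
  irreflexive e -> (0 < #|T|)%N ->
  (forall v, (1/2 + eps) * INR #|T| <= INR #|nbhd e v|) -> eps < 1/2.
Proof.
move=> irr /card_gt0P [v _] deg.
have deg_lt : (#|nbhd e v| < #|T|)%N.
  by have := max_card (v |: nbhd e v); rewrite cardsU1 inE irr.
have := le_INR _ _ (leP deg_lt); rewrite S_INR.
by have := deg v; have := pos_INR #|nbhd e v|; nra.
Qed.

Lemma count_ge_of_potential_bound (eps n : R) (K c : nat) :
  0 < eps < 1/2 -> 0 < n -> 1 <= ln n -> 12 / eps * ln n - 1 < INR K ->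
  1 <= n ^ 2 * (1 - 99/100 * eps) ^ K * 2 ^ c -> 12 * ln n <= INR c.
Proof.
move=> eps_bd n_pos ln_n K_gt cover; set q := 1 - 99/100 * eps.
have q_pos : 0 < q by rewrite /q; lra.
have ln_cover : 0 <= 2 * ln n + INR K * ln q + INR c * ln 2.
  have n2 := pow_lt n 2 n_pos; have qK := pow_lt q K q_pos.
  have c2 := pow_lt 2 c ltac:(lra).
  rewrite -/q in cover; have := ln_le_ln Rlt_0_1 cover.
  by rewrite ln_1 !ln_mult ?ln_pow ?ln_1 //; try nra.
have ln_q : ln q <= q - 1 by have := exp_ineq1_le (ln q); rewrite exp_ln //; lra.
have eps_K : 12 * ln n - eps < eps * INR K.
  have : eps * (12 / eps * ln n - 1) < eps * INR K by apply: Rmult_lt_compat_l; lra.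
  by have -> : eps * (12 / eps * ln n - 1) = 12 * ln n - eps by field; lra.
have K_ln_q : INR K * ln q <= - (99/100) * (eps * INR K).
  by have := Rmult_le_compat_l _ _ _ (pos_INR K) ln_q; rewrite /q; lra.
case: (Rle_lt_dec (12 * ln n) (INR c)) => // c_lt.
have c_ln2 : INR c * ln 2 <= 12 * ln n * (78/100).
  by have := ln2_lt; have := ln_lt_2; have := pos_INR c; nra.
lra.
Qed.

Theorem lemma1 :
  forall eps : R, (0 < eps)%R ->
  exists N : nat, forall n : nat, (N <= n)%N ->
  forall (T : finType) (e : rel T),
    #|T| = n :> nat -> simple_graph e ->
    (forall v : T, ((1/2 + eps) * INR n <= INR #|nbhd e v|)%R) ->
    exists L : {set T},
      (INR #|L| <= (12 / eps) * ln (INR n))%R /\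
      (forall u v : T, u != v -> u \notin L -> v \notin L ->
         (12 * ln (INR n) <= INR #|common_nbrs_in e L u v|)%R).
Proof.
move=> eps eps_pos.
(* [ln n <= eps^2 n / 600] forces [K <= eps n / 50], so that every pair keeps
   [1.98 eps n] common neighbours outside [L] during the greedy steps. *)
have [N ln_small] := ln_le_mul_eventually (c := eps * eps / 600) ltac:(nra).
exists (maxn 3 N) => n; rewrite geq_max => /andP[n_ge3 /ln_small ln_n_le] T e cardT [_ irr] deg.
subst n; have T_gt0 : (0 < #|T|)%N by apply: leq_trans n_ge3.
have ln_n_ge1 : 1 <= ln (INR #|T|).
  rewrite -(ln_exp 1); apply: ln_le_ln; first exact: exp_pos.
  by have := exp_le_3; have := le_INR _ _ (leP n_ge3); rewrite /=; lra.
have eps_half := min_degree_lt_half irr T_gt0 deg.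
have [K [K_gt K_le]] : exists K : nat,
    12 / eps * ln (INR #|T|) - 1 < INR K <= 12 / eps * ln (INR #|T|).
  by apply: exists_nat_floor; apply: Rmult_le_pos; [apply: Rlt_le; apply: Rdiv_lt_0_compat|]; lra.
have K_small : INR K <= eps * INR #|T| / 50.
  apply: (Rle_trans _ _ _ K_le).
  have -> : eps * INR #|T| / 50 = 12 / eps * (eps * eps / 600 * INR #|T|) by field; lra.
  by apply: Rmult_le_compat_l => //; apply: Rlt_le; apply: Rdiv_lt_0_compat; lra.
have [d [min_deg d_big]] := exists_min_above T_gt0 deg.
have K_leT : (K <= #|T|)%N by apply/leP/INR_le; nra.
have q_ge0 : 0 <= 1 - 99/100 * eps by lra.
have q_le1 : 1 - 99/100 * eps <= 1 by lra.
have rate : 2 * (1 - (1 - 99/100 * eps)) * INR #|T| <= 2 * INR d - INR #|T| - INR K by lra.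
have [L [cardL cover]] := exists_greedy_cover min_deg K_leT q_ge0 q_le1 rate.
exists L; split; first by rewrite cardL.
move=> u v uv _ _; apply: (count_ge_of_potential_bound _ _ ln_n_ge1 K_gt (cover u v uv)); [split=> // | exact/lt_0_INR/ltP].
Qed.
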